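(* Let $\alpha\in(\pi/8,3\pi/8)$ with $\alpha/\pi\notin\mathbb{Q}$, $\beta=\alpha-\pi/2$, $\rho=0.01$, $A_1=\rho R(\alpha)$, $A_2=\rho R(\beta)$ where $R(\theta)=\begin{bmatrix}\cos\theta&-\sin\theta\\ \sin\theta&\cos\theta\end{bmatrix}$, and $c(x)=x_1^2+2x_2^2$ on $\mathbb{R}^2$. Let $J^\star$ be the optimal value function, $\tilde J^\star(\theta)=J^\star([\cos\theta,\sin\theta]^\top)$, $\Delta\tilde J^\star(\theta)=\tilde J^\star(\theta+\alpha)-\tilde J^\star(\theta+\beta)$, $\mu=\pi/4-\alpha$, $\delta=0.01$, and let $\nu\in(\mu-\delta,\mu+\delta)$ satisfy $\Delta\tilde J^\star(\nu)=0$. Let $I=[\nu+\beta,\nu+\alpha)$ and $T:I\to I$ be defined by $T(\theta)=\theta+\alpha$ if $\theta<\nu$ and $T(\theta)=\theta+\beta$ if $\theta\geq\nu$. Then for every $\theta\in I$, the backward orbit $\{T^{-1}\theta,T^{-2}\theta,T^{-3}\theta,\ldots\}$ is dense in $I$.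
   Context: $T$ is a bijection of $I$ (an interval exchange map), so $T^{-k}$ is well defined. For the switched linear system $\xi(t+1)=A_{\sigma(t)}\xi(t)$ with $\sigma:\mathbb{N}\to\{1,2\}$, $J^\star(x)=\inf_\sigma\sum_{t=0}^\infty c(\xi(t,x,\sigma))$ where $\xi(t,x,\sigma)$ is the solution with $\xi(0)=x$. *)

From HB Require Import structures.
From mathcomp Require Import all_boot all_order all_algebra.
From mathcomp Require Import all_classical all_reals all_analysis.
Set Implicit Arguments. Unset Strict Implicit. Unset Printing Implicit Defensive.
Import Order.TTheory GRing.Theory Num.Theory.
Import numFieldNormedType.Exports.
Local Open Scope classical_set_scope.
Local Open Scope ring_scope.

Section Defs.
Variable R : realType.

Definition rho : R := 1 / 100.
Definition rotA (th : R) (x : R * R) : R * R :=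
  (rho * (cos th * x.1 - sin th * x.2), rho * (sin th * x.1 + cos th * x.2)).

Definition beta_of (al : R) : R := al - pi / 2.

Definition Amode (al : R) (i : bool) : R * R -> R * R :=
  if i then rotA al else rotA (beta_of al).

Fixpoint traj (al : R) (sigma : nat -> bool) (x : R * R) (t : nat) : R * R :=
  match t with
  | O => x
  | S t' => Amode al (sigma t') (traj al sigma x t')
  end.

Definition cost (x : R * R) : R := x.1 ^+ 2 + 2 * x.2 ^+ 2.

Definition Jstar (al : R) (x : R * R) : \bar R :=
  ereal_inf [set (\sum_(0 <= t <oo) (cost (traj al sigma x t))%:E)%E
            | sigma in [set: nat -> bool]].

Definition Jtilde (al : R) (th : R) : \bar R := Jstar al (cos th, sin th).

Definition DeltaJ (al : R) (th : R) : \bar R :=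
  (Jtilde al (th + al) - Jtilde al (th + beta_of al))%E.

Definition Iset (al nu : R) : set R :=
  [set th | nu + beta_of al <= th < nu + al].

Definition Tmap (al nu : R) (th : R) : R :=
  if th < nu then th + al else th + beta_of al.

(* backward orbit {T^-1 th, T^-2 th, ...}: the points phi of I with
   T^k phi = th for some k >= 1 (T is a bijection of I) *)
Definition backward_orbit (al nu th : R) : set R :=
  [set phi | Iset al nu phi /\ exists k : nat, iter k.+1 (Tmap al nu) phi = th].

End Defs.

From HB Require Import structures.
From mathcomp Require Import all_boot all_order all_algebra.
From mathcomp Require Import all_classical all_reals all_analysis.
From mathcomp Require Import ring lra.
Import Order.TTheory GRing.Theory Num.Theory.
Import numFieldNormedType.Exports.
Local Open Scope classical_set_scope.
Local Open Scope ring_scope.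

Set Implicit Arguments.
Unset Strict Implicit.
Unset Printing Implicit Defensive.

(** Since [alpha - beta = pi/2], the coordinate [theta - (nu + beta)] identifies
   [I] with the circle [R/(pi/2)Z], and [T] becomes the rotation by [alpha],
   whatever [nu] is.
   The backward orbit of [theta] is then the sequence [u - n alpha] modulo
   [pi/2].  A bounded sequence has two terms closer than any [e > 0]
   (Bolzano-Weierstrass); their difference [d] is a multiple of [-alpha]
   modulo [pi/2], nonzero by irrationality of [alpha/pi], and the multiples of
   [d] modulo [pi/2] come within [|d|] of every point. *)

Lemma bounded_seq_close_pair (R : realType) (u : R^nat) (e : R) :
  bounded_fun u -> 0 < e -> exists a b, (a < b)%N /\ `|u a - u b| < e.
Proof.
move=> /bolzano_weierstrass[f f_incr] /cvg_cauchy/cauchy_ballP u_cauchy e0.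
have := u_cauchy _ e0; rewrite !near_map2 -ball_normE => /nearP_dep close.
near \oo => n; near \oo => m.
exists (f n), (f m); split; last by near: m; near: n.
have f_mono : (f m <= f n)%N = (m <= n)%N := f_incr m n.
by rewrite ltnNge f_mono -ltnNge; near: m; apply: nbhs_infty_gt.
Unshelve. all: by end_near. Qed.

Section Modulo.
Context {R : realType}.
Variable L : R.
Hypothesis L_gt0 : 0 < L.

Definition modr (y : R) : R := y - (Num.floor (y / L))%:~R * L.

Lemma modr_itv (y : R) : 0 <= modr y < L.
Proof.
have /andP[fl_le lt_fl1] := floor_itv (y / L).
rewrite ler_pdivlMr // intrD ltr_pdivrMr // in fl_le lt_fl1.
rewrite /modr; apply/andP; split; lra.
Qed.

Lemma modr_def (y : R) (m : int) :
  0 <= y - m%:~R * L < L -> modr y = y - m%:~R * L.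
Proof.
move=> /andP[ge0 ltL]; rewrite /modr (@floor_def _ _ m) //.
by rewrite ler_pdivlMr // intrD ltr_pdivrMr //; apply/andP; split; lra.
Qed.

Lemma modr_id (y : R) : 0 <= y < L -> modr y = y.
Proof. by move=> y_itv; rewrite (@modr_def y 0) mul0r subr0. Qed.

Lemma modrDz (y : R) (m : int) : modr (y + m%:~R * L) = modr y.
Proof.
rewrite (@modr_def _ (Num.floor (y / L) + m)) /modr; first by rewrite intrD; lra.
by have := modr_itv y; rewrite /modr intrD; lra.
Qed.

Lemma modr_window (c d t : R) : 0 <= c < L -> d != 0 -> 0 <= t -> t + `|d| <= L ->
  exists k : nat, t <= modr (c + k%:R * d) < t + `|d|.
Proof.
move=> /andP[c_ge0 c_ltL] d_neq0 t_ge0 tdL.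
(* Walk from [c] in steps of [d] until landing in [[t - L, t - L + |d|)] when
   [d < 0], resp. in [[t + L, t + L + d)] when [d > 0]. *)
case: (ltgtP d 0) => [d_lt0|d_gt0|d0]; last by rewrite d0 eqxx in d_neq0.
- rewrite ltr0_norm // in tdL *.
  have z_ge0 : 0 <= (c - t + L) / - d by rewrite divr_ge0 //; lra.
  exists (Num.truncn ((c - t + L) / - d)).
  have /andP[k_le lt_k1] := truncn_itv z_ge0.
  rewrite ler_pdivlMr ?oppr_gt0 // in k_le.
  rewrite -addn1 natrD ltr_pdivrMr ?oppr_gt0 // in lt_k1.
  rewrite (@modr_def _ (-1)) mulN1r; apply/andP; split; nra.
- rewrite gtr0_norm // in tdL *.
  have z_ge0 : 0 <= Num.ceil ((t + L - c) / d).
    by rewrite ceil_ge0 (@lt_le_trans _ _ 0) ?divr_ge0 //; lra.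
  exists `|Num.ceil ((t + L - c) / d)|%N; rewrite natr_absz ger0_norm //.
  have /andP[lt_k1 k_le] := ceil_itv ((t + L - c) / d).
  rewrite intrB ltr_pdivlMr // in lt_k1.
  rewrite ler_pdivrMr // in k_le.
  rewrite (@modr_def _ 1) mul1r; apply/andP; split; nra.
Qed.

Lemma modr_approx (c d x : R) : 0 <= c < L -> d != 0 -> `|d| <= L -> 0 <= x < L ->
  exists k : nat, `|x - modr (c + k%:R * d)| < `|d|.
Proof.
move=> c_itv d_neq0 dL /andP[x_ge0 x_ltL].
have [t [t_ge0 [tdL /andP[t_le_x x_lt]]]] :
    exists t, 0 <= t /\ t + `|d| <= L /\ t <= x < t + `|d|.
  have d_gt0 : 0 < `|d| by rewrite normr_gt0.
  case: (lerP (x + `|d|) L) => xdL.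
    by exists x; do 2!split => //; apply/andP; split; lra.
  exists (L - `|d|); split; first lra.
  by split; [lra | apply/andP; split; lra].
have [k /andP[t_le lt_td]] := modr_window c_itv d_neq0 t_ge0 tdL.
by exists k; rewrite ltr_norml; apply/andP; split; lra.
Qed.

End Modulo.

Section IrrationalRotation.
Context {R : realType}.
Variables L a : R.
Hypothesis L_gt0 : 0 < L.
Hypothesis a_irr : ~ exists q : rat, a / L = ratr q.

Lemma modr_orbit_dense (u x e : R) : 0 <= x < L -> 0 < e ->
  exists n : nat, `|x - modr L (u - n.+1%:R * a)| < e.
Proof.
move=> x_itv e_gt0.
pose g n := modr L (u - n.+1%:R * a).
have g_itv n : 0 <= g n < L := modr_itv L_gt0 _.
have g_bounded : bounded_fun g.
  exists L; split; first exact: num_real.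
  by move=> M LM n _ /=; have /andP[g_ge0 g_lt] := g_itv n; rewrite ger0_norm //; lra.
have [i [j [lt_ij close_ij]]] := bounded_seq_close_pair g_bounded e_gt0.
pose p := (j - i)%N.
have p_gt0 : (0 : R) < p%:R by rewrite ltr0n subn_gt0.
pose d := g j - g i.
have [m dE] : exists m : int, d = m%:~R * L - p%:R * a.
  exists (Num.floor ((u - i.+1%:R * a) / L) - Num.floor ((u - j.+1%:R * a) / L)).
  by rewrite /d /g /modr /p intrB (natrB _ (ltnW lt_ij)) !mulrSr; ring.
have d_neq0 : d != 0.
  apply/eqP => d0; apply: a_irr; exists (m%:Q / p%:Q).
  rewrite fmorph_div /= ratr_int ratr_nat.
  have pa : p%:R * a = m%:~R * L by move: dE; rewrite d0; lra.
  rewrite -[a](mulKf (lt0r_neq0 p_gt0)) pa.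
  by field; rewrite (gt_eqF p_gt0) (gt_eqF L_gt0).
have d_lt_e : `|d| < e by rewrite /d distrC.
have d_le_L : `|d| <= L.
  have /andP[? ?] := g_itv i; have /andP[? ?] := g_itv j.
  by rewrite /d ler_norml; apply/andP; split; lra.
have [k close_k] := modr_approx L_gt0 (g_itv 0%N) d_neq0 d_le_L x_itv.
exists (k * p)%N.
have -> : modr L (u - (k * p).+1%:R * a) = modr L (g 0%N + k%:R * d).
  rewrite -(modrDz L_gt0 _ (m *+ k - Num.floor ((u - 1%:R * a) / L))).
  congr (modr L _); rewrite dE /g /modr intrB.
  by rewrite raddfMn -mulr_natr -[(k * p).+1]addn1 natrD natrM; ring.
exact: lt_trans close_k d_lt_e.
Qed.

End IrrationalRotation.

Lemma pi_half_gt0 (R : realType) : (0 : R) < pi / 2.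
Proof. by rewrite divr_gt0 ?pi_gt0. Qed.

Section RotationCoordinate.
Context {R : realType}.
Variables al nu : R.
Hypothesis al_itv : 0 < al < pi / 2.

Lemma IsetP (th : R) : Iset al nu th <-> 0 <= th - (nu + beta_of al) < pi / 2.
Proof. by rewrite /Iset /beta_of /=; split => /andP[? ?]; apply/andP; split; lra. Qed.

Lemma Tmap_modr (y : R) :
  Tmap al nu (nu + beta_of al + modr (pi / 2) y) =
  nu + beta_of al + modr (pi / 2) (y + al).
Proof.
set F := Num.floor (y / (pi / 2)).
have modr_yE : modr (pi / 2) y = y - F%:~R * (pi / 2) by [].
have /andP[] := modr_itv (pi_half_gt0 R) y; rewrite modr_yE => m_ge0 m_lt.
have /andP[al_gt0 al_lt] := al_itv.
rewrite /Tmap /beta_of; case: ltP => y_lt.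
- by rewrite (modr_def (pi_half_gt0 R) (m := F)); [lra | apply/andP; split; lra].
- rewrite (modr_def (pi_half_gt0 R) (m := F + 1)) intrD; first lra.
  by apply/andP; split; lra.
Qed.

Lemma iter_Tmap_modr (n : nat) (y : R) :
  iter n (Tmap al nu) (nu + beta_of al + modr (pi / 2) y) =
  nu + beta_of al + modr (pi / 2) (y + n%:R * al).
Proof.
elim: n => [|n IHn]; first by rewrite mul0r addr0.
by rewrite iterS IHn Tmap_modr -[n.+1%:R]natr1; congr (_ + modr _ _); ring.
Qed.

Lemma backward_orbit_modr (th : R) (n : nat) : Iset al nu th ->
  backward_orbit al nu th
    (nu + beta_of al + modr (pi / 2) (th - (nu + beta_of al) - n.+1%:R * al)).
Proof.
move=> /IsetP th_I; split.
  by apply/IsetP; rewrite [nu + beta_of al + _]addrC addrK modr_itv ?pi_half_gt0.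
by exists n; rewrite iter_Tmap_modr subrK modr_id ?pi_half_gt0 // addrC subrK.
Qed.

End RotationCoordinate.

Theorem lemma9 (R : realType) (al nu : R) :
  pi / 8 < al < 3 * pi / 8 ->
  ~ (exists q : rat, al / pi = ratr q) ->
  (pi / 4 - al) - 1 / 100 < nu < (pi / 4 - al) + 1 / 100 ->
  DeltaJ al nu = 0%E ->
  forall th, Iset al nu th ->
    Iset al nu `<=` closure (backward_orbit al nu th).
Proof.
move=> /andP[al_gt al_lt] al_irr _ _ th th_I x /IsetP x_I B /nbhs_ballP[e /= e_gt0 eB].
have pi_gt0 := pi_gt0 R.
have al_itv : 0 < al < pi / 2 by apply/andP; split; lra.
have al_irr2 : ~ exists q : rat, al / (pi / 2) = ratr q.
  move=> [q al_q]; apply: al_irr; exists (q / 2%:R).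
  by rewrite fmorph_div /= ratr_nat -al_q -mulrA -invfM divfK ?pnatr_eq0.
have [n close] := modr_orbit_dense (pi_half_gt0 R) al_irr2 (th - (nu + beta_of al)) x_I e_gt0.
exists (nu + beta_of al + modr (pi / 2) (th - (nu + beta_of al) - n.+1%:R * al)).
split; first exact: backward_orbit_modr.
by apply: eB; rewrite -ball_normE /= opprD addrA.
Qed.
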